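(* If $f\colon X\to Y$ is a Lipschitz function of metric spaces, then $\dim_{AN}(X)\le \dim_{AN}(f)+\dim_{AN}(Y)$.
   Context: For a metric space $X$, $n\ge0$: an $n$-dimensional control function of $X$ is $D_X\colon\mathbb R_+\to\mathbb R_+$ such that for each $r>0$ there are families $\mathcal U_1,\dots,\mathcal U_{n+1}$ of subsets of $X$, each $r$-disjoint (points in different members at distance $\ge r$), with members of diameter $\le D_X(r)$, whose union covers $X$. $\dim_{AN}(X)\le n$ iff $X$ has an $n$-dimensional control function of the form $D_X(r)=cr$ for some $c>0$. For $r>0$, the $r$-components of $A\subset X$ are the classes of points of $A$ joined by finite sequences in $A$ with consecutive distances $\le r$. An $m$-dimensional control function of $f\colon X\to Y$ is $D_f\colon\mathbb R_+\times\mathbb R_+\to\mathbb R_+$ such that for all $r_X,R_Y>0$ every $A\subset X$ with $\operatorname{diam} f(A)\le R_Y$ is a union of $m+1$ sets whose $r_X$-components have diameter $\le D_f(r_X,R_Y)$. $\dim_{AN}(f)$ is the minimal $m$ for which $f$ has an $m$-dimensional control function of the form $D_f(r_X,R_Y)=a r_X+bR_Y$ (constants $a,b$). *)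

From Stdlib Require Import Reals.
Open Scope R_scope.

Record MetricSpace := {
  mcarrier :> Type;
  dist : mcarrier -> mcarrier -> R;
  dist_eq0 : forall x y, dist x y = 0 <-> x = y;
  dist_sym : forall x y, dist x y = dist y x;
  dist_tri : forall x y z, dist x z <= dist x y + dist y z
}.

Arguments dist {m} _ _.

Definition Lipschitz {X Y : MetricSpace} (f : X -> Y) : Prop :=
  exists L : R, 0 <= L /\ forall x y : X, dist (f x) (f y) <= L * dist x y.

Definition family (X : MetricSpace) := (X -> Prop) -> Prop.

Definition r_disjoint {X : MetricSpace} (r : R) (F : family X) : Prop :=
  forall U V, F U -> F V -> U <> V ->
    forall x y, U x -> V y -> r <= dist x y.

Definition diam_le {X : MetricSpace} (A : X -> Prop) (D : R) : Prop :=
  forall x y, A x -> A y -> dist x y <= D.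

Definition members_bounded {X : MetricSpace} (D : R) (F : family X) : Prop :=
  forall U, F U -> diam_le U D.

Definition space_control_fn (X : MetricSpace) (n : nat) (D : R -> R) : Prop :=
  forall r, 0 < r ->
    exists U : nat -> family X,
      (forall i, (i <= n)%nat -> r_disjoint r (U i) /\ members_bounded (D r) (U i)) /\
      (forall x : X, exists i, (i <= n)%nat /\ exists V, U i V /\ V x).

Definition ANdim_le (X : MetricSpace) (n : nat) : Prop :=
  exists c : R, 0 < c /\ space_control_fn X n (fun r => c * r).

Inductive r_chain {X : MetricSpace} (B : X -> Prop) (r : R) : X -> X -> Prop :=
  | r_chain_refl : forall x, B x -> r_chain B r x x
  | r_chain_step : forall x y z, r_chain B r x y -> B z -> dist y z <= r ->
                    r_chain B r x z.

Definition components_diam_le {X : MetricSpace} (B : X -> Prop) (r D : R) : Prop :=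
  forall x y, r_chain B r x y -> dist x y <= D.

Definition map_control_fn {X Y : MetricSpace} (f : X -> Y) (m : nat)
    (D : R -> R -> R) : Prop :=
  forall rX RY, 0 < rX -> 0 < RY ->
    forall A : X -> Prop,
      (forall x y, A x -> A y -> dist (f x) (f y) <= RY) ->
      exists B : nat -> (X -> Prop),
        (forall i x, (i <= m)%nat -> B i x -> A x) /\
        (forall x, A x -> exists i, (i <= m)%nat /\ B i x) /\
        (forall i, (i <= m)%nat -> components_diam_le (B i) rX (D rX RY)).

Definition map_linear_control {X Y : MetricSpace} (f : X -> Y) (m : nat) : Prop :=
  exists a b : R, 0 <= a /\ 0 <= b /\
    map_control_fn f m (fun rX RY => a * rX + b * RY).

Definition map_ANdim_le {X Y : MetricSpace} (f : X -> Y) (m : nat) : Prop :=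
  exists k, (k <= m)%nat /\ map_linear_control f k.

(* Cover [Y] by [n+1] [R']-disjoint families [U_0, ..., U_n], with [R'] proportional to [r].
   The preimage of a member of [U_i] has [f]-diameter [O(r)], so it splits into [k+1] pieces
   whose [s_i]-components have diameter [O(r)]. The colours [0, ..., n+k] are filled in [n+1]
   stages at the decreasing scales [rho_i = 3^(n-i) r]: at stage [i] a point of piece [j] over
   [U_i] takes the first colour [u >= i+j] whose class it is not [rho_i]-close to. A new
   [rho_i]-component of colour [u] is then either an old component, or it lies over a single
   member of [U_i] (as [f] is Lipschitz) and consists of points of piece [u-i] and points
   [rho_i]-close to the old colour [u-1]; either way its diameter stays linear in [r]. The
   [r]-components of the final colour classes form the required [m+n+1] families. *)

From Stdlib Require Import Reals Lra Lia Wf_nat Classical IndefiniteDescription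
  FunctionalExtensionality PropExtensionality.
Open Scope R_scope.

Lemma dist_self (X : MetricSpace) (x : X) : dist x x = 0.
Proof. exact (proj2 (dist_eq0 X x x) eq_refl). Qed.

Lemma dist_ge0 (X : MetricSpace) (x y : X) : 0 <= dist x y.
Proof.
  pose proof (dist_tri X x y x) as H.
  rewrite dist_self, (dist_sym X y x) in H. lra.
Qed.

Section Chains.
Variable X : MetricSpace.
Implicit Types (A B P Q : X -> Prop) (r : R).

Lemma r_chain_meml B r x y : r_chain B r x y -> B x.
Proof. induction 1; auto. Qed.

Lemma r_chain_memr B r x y : r_chain B r x y -> B y.
Proof. induction 1; auto. Qed.

Lemma r_chain_trans B r x y z : r_chain B r x y -> r_chain B r y z -> r_chain B r x z.
Proof.
  intros Hxy Hyz. induction Hyz as [| y' z' w Hyz IH Bw Hzw]; [exact Hxy|].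
  exact (r_chain_step _ _ _ _ _ (IH Hxy) Bw Hzw).
Qed.

Lemma r_chain_sym B r x y : r_chain B r x y -> r_chain B r y x.
Proof.
  induction 1 as [x Bx | x y z _ IH Bz Hyz]; [now apply r_chain_refl|].
  apply (r_chain_trans _ _ _ y); [|exact IH].
  apply (r_chain_step _ _ z z y); [now apply r_chain_refl | eapply r_chain_meml; eauto |].
  now rewrite dist_sym.
Qed.

Lemma r_chain_sub A B r r' x y :
  (forall z, A z -> B z) -> r <= r' -> r_chain A r x y -> r_chain B r' x y.
Proof.
  intros HAB Hr. induction 1 as [x Ax | x y z _ IH Az Hyz]; [apply r_chain_refl; auto|].
  apply (r_chain_step _ _ _ y); auto. lra.
Qed.

Lemma components_diam_le_sub A B r r' D D' :
  components_diam_le B r' D -> (forall z, A z -> B z) -> r <= r' -> D <= D' ->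
  components_diam_le A r D'.
Proof.
  intros HB HAB Hr HD x y Hxy.
  apply (Rle_trans _ D); [|exact HD]. apply HB. eapply r_chain_sub; eauto.
Qed.

Lemma r_chain_split B P Q r x y :
  (forall z, B z -> P z \/ Q z) -> (forall p q, P p -> Q q -> r < dist p q) ->
  r_chain B r x y -> r_chain P r x y \/ r_chain Q r x y.
Proof.
  intros HPQ Hsep. induction 1 as [x Bx | x y z _ IH Bz Hyz].
  - destruct (HPQ x Bx); [left | right]; now apply r_chain_refl.
  - destruct IH as [IH | IH]; destruct (HPQ z Bz) as [Pz | Qz].
    + left. eapply r_chain_step; eauto.
    + exfalso. pose proof (Hsep y z (r_chain_memr _ _ _ _ IH) Qz). lra.
    + exfalso. pose proof (Hsep z y Pz (r_chain_memr _ _ _ _ IH)).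
      rewrite dist_sym in Hyz. lra.
    + right. eapply r_chain_step; eauto.
Qed.

Definition nbhd (rho : R) A (x : X) : Prop := exists q, A q /\ dist x q <= rho.

Lemma nbhd_components A rho D :
  components_diam_le A (3 * rho) D -> components_diam_le (nbhd rho A) rho (D + 2 * rho).
Proof.
  intros HA x y Hxy.
  assert (exists qx qy, dist x qx <= rho /\ dist y qy <= rho /\ r_chain A (3 * rho) qx qy)
    as (qx & qy & Hx & Hy & Hq).
  { induction Hxy as [x [q [Aq Hq]] | x y z _ IH [q [Aq Hq]] Hyz].
    - exists q, q. repeat split; auto. now apply r_chain_refl.
    - destruct IH as (qx & qy & Hx & Hy & Hqxy). exists qx, q. repeat split; auto.
      eapply r_chain_step; eauto.
      pose proof (dist_tri X qy y q). pose proof (dist_tri X y z q).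
      rewrite (dist_sym X qy y) in *. lra. }
  pose proof (HA _ _ Hq). pose proof (dist_tri X x qx y). pose proof (dist_tri X qx qy y).
  rewrite (dist_sym X qy y) in *. lra.
Qed.

(* The points of [S] met along a [rho]-chain in [S ∪ Z] form an [s]-chain in [S]: two
   consecutive ones are joined through a [Z]-component, so they are [2 rho + DZ <= s] apart. *)
Lemma union_components B S Z (s rho DS DZ : R) :
  (forall x, B x -> S x \/ Z x) -> components_diam_le S s DS -> components_diam_le Z rho DZ ->
  0 <= rho -> 0 <= DS -> 0 <= DZ -> 2 * rho + DZ <= s ->
  components_diam_le B rho (DS + 2 * (rho + DZ)).
Proof.
  intros HB HS HZ Hrho HDS HDZ Hs.
  set (att := fun p x => S p /\ (x = p \/ exists z, dist p z <= rho /\ r_chain Z rho z x)).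
  assert (Hatt : forall p x, att p x -> dist x p <= rho + DZ).
  { intros p x [_ [-> | (z & Hpz & Hzx)]]; [rewrite dist_self; lra|].
    pose proof (HZ _ _ Hzx). pose proof (dist_tri X x z p).
    rewrite (dist_sym X x z), (dist_sym X z p) in *. lra. }
  intros x y Hxy.
  assert (r_chain Z rho x y \/ exists p q, att p x /\ att q y /\ r_chain S s p q) as Hinv.
  { induction Hxy as [x Bx | x y w _ IH Bw Hyw].
    - destruct (HB x Bx) as [Sx | Zx]; [right | left; now apply r_chain_refl].
      exists x, x. repeat split; auto. now apply r_chain_refl.
    - destruct (classic (S w)) as [Sw | nSw].
      + right. destruct IH as [IH | (p & q & Hp & [Sq Hq] & Hpq)].
        * exists w, w. repeat split; auto; [|now apply r_chain_refl].
          right. exists y. rewrite dist_sym. auto using r_chain_sym.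
        * exists p, w. split; [exact Hp|]. split; [split; auto|].
          apply (r_chain_step _ _ _ q); auto.
          destruct Hq as [-> | (z & Hqz & Hzy)]; [lra|].
          pose proof (HZ _ _ Hzy). pose proof (dist_tri X q z w). pose proof (dist_tri X z y w).
          lra.
      + assert (Zw : Z w) by (destruct (HB w Bw); tauto).
        destruct IH as [IH | (p & q & Hp & [Sq Hq] & Hpq)];
          [left; eapply r_chain_step; eauto | right].
        exists p, q. split; [exact Hp|]. split; [|exact Hpq]. split; [exact Sq|]. right.
        destruct Hq as [-> | (z & Hqz & Hzy)].
        * exists w. split; [exact Hyw | now apply r_chain_refl].
        * exists z. split; [exact Hqz | eapply r_chain_step; eauto]. }
  destruct Hinv as [Hz | (p & q & Hp & Hq & Hpq)]; [pose proof (HZ _ _ Hz); lra|].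
  pose proof (Hatt _ _ Hp). pose proof (Hatt _ _ Hq). pose proof (HS _ _ Hpq).
  pose proof (dist_tri X x p y). pose proof (dist_tri X p q y).
  rewrite (dist_sym X y q) in *. lra.
Qed.

Lemma r_components_family (N : nat) (C : nat -> X -> Prop) (r D : R) :
  (forall x, exists u, (u <= N)%nat /\ C u x) -> (forall u, components_diam_le (C u) r D) ->
  exists F : nat -> family X,
    (forall i, (i <= N)%nat -> r_disjoint r (F i) /\ members_bounded D (F i)) /\
    (forall x, exists i, (i <= N)%nat /\ exists V, F i V /\ V x).
Proof.
  intros Hcov HC.
  exists (fun u W => exists x0, C u x0 /\ W = r_chain (C u) r x0). split.
  - intros u _. split.
    + intros W1 W2 (x1 & _ & ->) (x2 & _ & ->) Hne y1 y2 H1 H2.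
      destruct (Rle_lt_dec r (dist y1 y2)) as [Hr | Hr]; [exact Hr|]. exfalso. apply Hne.
      assert (H12 : r_chain (C u) r x1 x2).
      { apply (r_chain_trans _ _ _ y2); [|now apply r_chain_sym].
        apply (r_chain_step _ _ _ y1); [exact H1 | exact (r_chain_memr _ _ _ _ H2) | lra]. }
      apply functional_extensionality. intros z. apply propositional_extensionality.
      split; eauto using r_chain_trans, r_chain_sym.
    + intros W (x0 & _ & ->) y y' Hy Hy'. apply (HC u). eauto using r_chain_trans, r_chain_sym.
  - intros x. destruct (Hcov x) as (u & Hu & Cx). exists u. split; [exact Hu|].
    exists (r_chain (C u) r x). split; [now exists x | now apply r_chain_refl].
Qed.

End Chains.

Section Colouring.
Variables (X Y : MetricSpace) (f : X -> Y) (k : nat).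
Variable U : nat -> family Y.
Variable B : nat -> (Y -> Prop) -> nat -> X -> Prop.
Variable rho : nat -> R.

(* At stage [i] a point [x] of [B i V j] with [f x ∈ V ∈ U i] receives the first colour
   [u >= i + j] whose class it is not [rho i]-close to; all colours in between are then
   [rho i]-close to [x]. *)
Definition fresh (i : nat) (C : nat -> X -> Prop) (u : nat) (x : X) : Prop :=
  (u <= i + k)%nat /\
  (exists V, U i V /\ V (f x) /\ exists j, (j <= k)%nat /\ (i + j <= u)%nat /\ B i V j x /\
     forall t, (i + j <= t < u)%nat -> nbhd X (rho i) (C t) x) /\
  ~ nbhd X (rho i) (C u) x.

Fixpoint colour (i : nat) : nat -> X -> Prop :=
  match i with
  | O => fun _ _ => False
  | S i => fun u x => colour i u x \/ fresh i (colour i) u x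
  end.

Lemma colour_lt i u x : colour i u x -> (u < i + k)%nat.
Proof.
  revert u x. induction i as [|i IH]; intros u x Hx; [contradiction|].
  destruct Hx as [Hx | (Hu & _)]; [apply IH in Hx|]; lia.
Qed.

Lemma colour_mono i i' u x : (i <= i')%nat -> colour i u x -> colour i' u x.
Proof. induction 1; simpl; auto. Qed.

Lemma colour_cover i V j x : U i V -> V (f x) -> (j <= k)%nat -> B i V j x ->
  exists u, (u <= i + k)%nat /\ colour (S i) u x.
Proof.
  intros UV Vx Hj Bx.
  set (late := fun t => (i + j <= t)%nat /\ ~ nbhd X (rho i) (colour i t) x).
  destruct (dec_inh_nat_subset_has_unique_least_element late) as (u & [[Hju Hu] Hmin] & _).
  { intros t. apply classic. }
  { exists (i + k)%nat. split; [lia|]. intros (q & Cq & _). apply colour_lt in Cq. lia. }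
  assert (Huk : (u <= i + k)%nat).
  { apply Hmin. split; [lia|]. intros (q & Cq & _). apply colour_lt in Cq. lia. }
  exists u. split; [exact Huk|]. right. split; [exact Huk|]. split; [|exact Hu].
  exists V. repeat split; auto. exists j. repeat split; auto.
  intros t Ht. apply NNPP. intros Hnear.
  assert (u <= t)%nat by (apply Hmin; split; [lia | exact Hnear]). lia.
Qed.

Lemma fresh_far i u p q : colour i u p -> fresh i (colour i) u q -> rho i < dist p q.
Proof.
  intros Cp (_ & _ & Hq). apply Rnot_le_lt. intros Hpq. apply Hq.
  exists p. rewrite dist_sym. auto.
Qed.

Variables (L R' : R).
Hypothesis f_lip : forall x y, dist (f x) (f y) <= L * dist x y.
Hypothesis L_ge0 : 0 <= L.

Section Stage.
Variable i : nat.
Hypothesis U_disjoint : r_disjoint R' (U i).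
Hypothesis rho_lt : L * rho i < R'.
Hypothesis rho_ge0 : 0 <= rho i.

(* Close points have images closer than [R'], hence in the same member of [U i]. *)
Lemma same_member V V' x x' : U i V -> U i V' -> V (f x) -> V' (f x') ->
  dist x x' <= rho i -> V = V'.
Proof.
  intros UV UV' Vx V'x' Hxx'. apply NNPP. intros Hne.
  pose proof (U_disjoint V V' UV UV' Hne _ _ Vx V'x').
  pose proof (f_lip x x'). pose proof (Rmult_le_compat_l L _ _ L_ge0 Hxx'). lra.
Qed.

Lemma fresh_chain_member u V x y : U i V -> V (f x) ->
  r_chain (fresh i (colour i) u) (rho i) x y ->
  r_chain (fun z => fresh i (colour i) u z /\ V (f z)) (rho i) x y.
Proof.
  intros UV Vx. induction 1 as [x Nx | x y z _ IH Nz Hyz]; [now apply r_chain_refl|].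
  apply (r_chain_step _ _ _ y); [now apply IH | | exact Hyz]. split; [exact Nz|].
  destruct (r_chain_memr _ _ _ _ _ (IH Vx)) as [_ Vy].
  destruct Nz as (_ & (V' & UV' & V'z & _) & _).
  now rewrite (same_member V V' y z).
Qed.

Lemma fresh_member_split u V z : U i V -> fresh i (colour i) u z -> V (f z) ->
  B i V (u - i) z \/ nbhd X (rho i) (colour i (u - 1)) z.
Proof.
  intros UV (_ & (V' & UV' & V'z & j & _ & Hju & Bz & Hnear) & _) Vz.
  assert (V' = V) as -> by (apply (same_member V' V z z); auto; rewrite dist_self; lra).
  destruct (Nat.eq_dec (i + j) u) as [<- | Hne].
  - left. now replace (i + j - i)%nat with j by lia.
  - right. apply Hnear. lia.
Qed.

Lemma colour_succ_components (s DP E : R) :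
  (forall V j, U i V -> (j <= k)%nat -> components_diam_le (B i V j) s DP) ->
  (forall t, components_diam_le (colour i t) (3 * rho i) E) ->
  0 <= DP -> 0 <= E -> 4 * rho i + E <= s ->
  forall u, components_diam_le (colour (S i) u) (rho i) (DP + 2 * E + 6 * rho i).
Proof.
  intros HB HC HDP HE Hs u x y Hxy.
  destruct (r_chain_split X _ (colour i u) (fresh i (colour i) u) _ _ _ (fun z Hz => Hz)
    (fresh_far i u) Hxy) as [Hold | Hnew].
  - assert (dist x y <= E); [|lra].
    apply (HC u). apply (r_chain_sub X (colour i u) _ (rho i)); auto. lra.
  - destruct (r_chain_meml _ _ _ _ _ Hnew) as (Huk & (V & UV & Vx & _) & _).
    assert (HU := union_components X (fun z => fresh i (colour i) u z /\ V (f z))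
      (B i V (u - i)) (nbhd X (rho i) (colour i (u - 1))) s (rho i) DP (E + 2 * rho i)
      (fun z '(conj Nz Vz) => fresh_member_split u V z UV Nz Vz)
      ltac:(apply HB; auto; lia) (nbhd_components X _ _ _ (HC (u - 1)%nat))
      ltac:(lra) HDP ltac:(lra) ltac:(lra)).
    pose proof (HU x y (fresh_chain_member u V x y UV Vx Hnew)). lra.
Qed.

End Stage.

Lemma colour_components (n : nat) (s DP E : nat -> R) :
  (forall i, (i <= n)%nat -> r_disjoint R' (U i)) ->
  (forall i, (i <= n)%nat -> L * rho i < R') ->
  (forall i, (i < n)%nat -> rho i = 3 * rho (S i)) ->
  (forall i, 0 <= rho i) ->
  (forall i V j, (i <= n)%nat -> U i V -> (j <= k)%nat -> components_diam_le (B i V j) (s i) (DP i)) ->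
  (forall i, 0 <= DP i) -> (forall i, 0 <= E i) -> (forall i, 4 * rho i + E i <= s i) ->
  (forall i, E (S i) = DP i + 2 * E i + 6 * rho i) ->
  forall i u, (i <= n)%nat -> components_diam_le (colour (S i) u) (rho i) (E (S i)).
Proof.
  intros Hdisj Hlt Hrho Hrho0 HB HDP HE Hs HEsucc.
  assert (Hstep : forall i, (i <= n)%nat ->
    (forall t, components_diam_le (colour i t) (3 * rho i) (E i)) ->
    forall u, components_diam_le (colour (S i) u) (rho i) (E (S i))).
  { intros i Hi HC u. rewrite HEsucc.
    apply (colour_succ_components i (Hdisj i Hi) (Hlt i Hi) (Hrho0 i) (s i)); auto. }
  induction i as [|i IH]; intros u Hi; apply Hstep; auto.
  - intros t x y Hxy. contradiction (r_chain_meml _ _ _ _ _ Hxy).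
  - intros t. rewrite <- Hrho by lia. apply IH. lia.
Qed.

End Colouring.

Lemma preimage_decomposition (X Y : MetricSpace) (f : X -> Y) (k n : nat) (D : R -> R -> R)
    (U : nat -> family Y) (s : nat -> R) (RY : R) :
  map_control_fn f k D -> (forall i, 0 < s i) -> 0 < RY ->
  (forall i, (i <= n)%nat -> members_bounded RY (U i)) ->
  exists B : nat -> (Y -> Prop) -> nat -> X -> Prop,
    forall i V, (i <= n)%nat -> U i V ->
      (forall x, V (f x) -> exists j, (j <= k)%nat /\ B i V j x) /\
      (forall j, (j <= k)%nat -> components_diam_le (B i V j) (s i) (D (s i) RY)).
Proof.
  intros Hf Hs HRY HU.
  assert (Hpiece : forall p : nat * (Y -> Prop), exists Bp : nat -> X -> Prop,
    (fst p <= n)%nat -> U (fst p) (snd p) ->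
      (forall x, snd p (f x) -> exists j, (j <= k)%nat /\ Bp j x) /\
      (forall j, (j <= k)%nat -> components_diam_le (Bp j) (s (fst p)) (D (s (fst p)) RY))).
  { intros [i V]. simpl.
    destruct (classic ((i <= n)%nat /\ U i V)) as [[Hi UV] | Hn];
      [|exists (fun _ _ => False); tauto].
    destruct (Hf (s i) RY (Hs i) HRY (fun x => V (f x)) (fun x y => HU i Hi V UV _ _))
      as (Bp & _ & Hcov & Hdiam).
    exists Bp. auto. }
  destruct (functional_choice _ Hpiece) as [Bp HBp].
  exists (fun i V => Bp (i, V)). intros i V. exact (HBp (i, V)).
Qed.

(* The bound, in units of [r], on the [3^(n-i) r]-components of the colour classes after
   stage [i]; [beta] is the contribution [b c R'] of the diameter of the cover of [Y]. *)
Fixpoint growth (a beta : R) (n i : nat) : R :=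
  match i with
  | O => 0
  | S i => a * (4 * 3 ^ (n - i) + growth a beta n i) + beta
           + 2 * growth a beta n i + 6 * 3 ^ (n - i)
  end.

Lemma growth_ge0 a beta n i : 0 <= a -> 0 <= beta -> 0 <= growth a beta n i.
Proof.
  intros Ha Hbeta. induction i as [|i IH]; simpl; [lra|].
  pose proof (pow_le 3 (n - i) ltac:(lra)).
  assert (0 <= a * (4 * 3 ^ (n - i) + growth a beta n i)) by (apply Rmult_le_pos; lra).
  lra.
Qed.

(* Stage [i] works at scale [3^(n-i) r] with the cover of [Y] at the fixed scale
   [2 L 3^n r]: points closer than [3^n r] then have images in the same member. *)
Lemma colouring_at_scale (X Y : MetricSpace) (f : X -> Y) (L a b c : R) (k n : nat) (r : R) :
  0 < L -> (forall x y, dist (f x) (f y) <= L * dist x y) ->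
  0 <= a -> 0 <= b -> 0 < c ->
  map_control_fn f k (fun rX RY => a * rX + b * RY) -> space_control_fn Y n (fun r => c * r) ->
  0 < r ->
  exists C : nat -> X -> Prop, (forall x, exists u, (u <= n + k)%nat /\ C u x) /\
    forall u, components_diam_le (C u) r (growth a (b * (c * (2 * L * 3 ^ n))) n (S n) * r).
Proof.
  intros HL Hlip Ha Hb Hc Hf HY Hr.
  set (beta := b * (c * (2 * L * 3 ^ n))).
  set (rho := fun i => 3 ^ (n - i) * r).
  set (R' := 2 * L * 3 ^ n * r).
  set (s := fun i => (4 * 3 ^ (n - i) + growth a beta n i) * r).
  assert (Hpow : forall i, 0 < 3 ^ (n - i)) by (intros; apply pow_lt; lra).
  assert (HR' : 0 < R').
  { unfold R'. pose proof (pow_lt 3 n ltac:(lra)).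
    repeat apply Rmult_lt_0_compat; lra. }
  assert (Hbeta : 0 <= beta).
  { pose proof (pow_lt 3 n ltac:(lra)).
    repeat apply Rmult_le_pos; lra. }
  assert (Hg : forall i, 0 <= growth a beta n i) by (intros; apply growth_ge0; lra).
  assert (Hs : forall i, 0 < s i).
  { intros i. unfold s. pose proof (Hpow i). pose proof (Hg i).
    apply Rmult_lt_0_compat; lra. }
  assert (HcR' : 0 < c * R') by (apply Rmult_lt_0_compat; lra).
  destruct (HY R' HR') as [U [HU Hcov]].
  destruct (preimage_decomposition X Y f k n _ U s (c * R') Hf Hs HcR'
    (fun i Hi => proj2 (HU i Hi))) as [B HB].
  exists (colour X Y f k U B rho (S n)). split.
  - intros x. destruct (Hcov (f x)) as (i & Hi & V & UV & Vx).
    destruct (proj1 (HB i V Hi UV) x Vx) as (j & Hj & Bx).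
    destruct (colour_cover X Y f k U B rho i V j x UV Vx Hj Bx) as (u & Hu & Cx).
    exists u. split; [lia|]. apply (colour_mono _ _ _ _ _ _ _ (S i)); [lia | exact Cx].
  - intros u. replace r with (rho n) at 1 by (unfold rho; rewrite Nat.sub_diag; lra).
    apply (colour_components X Y f k U B rho L R' Hlip ltac:(lra) n s
             (fun i => a * s i + b * (c * R')) (fun i => growth a beta n i * r));
      [intros i .. | lia].
    + intros Hi. exact (proj1 (HU i Hi)).
    + intros Hi. unfold rho, R'. pose proof (pow_lt 3 n ltac:(lra)).
      assert (3 ^ (n - i) * r <= 3 ^ n * r).
      { apply Rmult_le_compat_r; [lra|]. apply Rle_pow; [lra | lia]. }
      assert (0 < L * (3 ^ n * r)) by (repeat apply Rmult_lt_0_compat; lra).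
      assert (L * (3 ^ (n - i) * r) <= L * (3 ^ n * r)) by (apply Rmult_le_compat_l; lra).
      lra.
    + intros Hi. unfold rho. replace (n - i)%nat with (S (n - S i)) by lia. simpl. lra.
    + unfold rho. pose proof (Hpow i). nra.
    + intros V j Hi UV Hj. exact (proj2 (HB i V Hi UV) j Hj).
    + pose proof (Rmult_le_pos a (s i) Ha (Rlt_le _ _ (Hs i))).
      pose proof (Rmult_le_pos b (c * R') Hb (Rlt_le _ _ HcR')). lra.
    + apply Rmult_le_pos; [apply Hg | lra].
    + unfold s, rho. lra.
    + simpl. unfold s, R', rho, beta. ring.
Qed.

Theorem mainTheorem4 (X Y : MetricSpace) (f : X -> Y) (m n : nat) :
  Lipschitz f -> map_ANdim_le f m -> ANdim_le Y n -> ANdim_le X (m + n).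
Proof.
  intros [L [HL0 HL]] [k [Hkm [a [b [Ha [Hb Hf]]]]]] [c [Hc HY]].
  assert (Hlip : forall x y, dist (f x) (f y) <= (L + 1) * dist x y).
  { intros x y. pose proof (HL x y). pose proof (dist_ge0 X x y). nra. }
  set (g := growth a (b * (c * (2 * (L + 1) * 3 ^ n))) n (S n)).
  exists (g + 1). split.
  { assert (0 <= g); [|lra]. apply growth_ge0; [lra|].
    pose proof (pow_le 3 n ltac:(lra)). repeat apply Rmult_le_pos; lra. }
  intros r Hr.
  destruct (colouring_at_scale X Y f (L + 1) a b c k n r ltac:(lra) Hlip Ha Hb Hc Hf HY Hr)
    as (C & Hcov & Hdiam).
  apply (r_components_family X (m + n) C r).
  - intros x. destruct (Hcov x) as (u & Hu & Cx). exists u. split; [lia | exact Cx].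
  - intros u. apply (components_diam_le_sub X _ _ r r _ _ (Hdiam u)); auto; [lra|].
    fold g. lra.
Qed.
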